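(* Let $K\ge 2$ and consider the multivariate multiple linear regression model $\mathbf{Y} = \mathbf{X}\boldsymbol{\beta}' + \boldsymbol{\mathcal{E}}$, where $\mathbf{Y}$ is an $n\times K$ matrix of traits, $\mathbf{X}$ is an $n\times 1$ genotype vector, $\boldsymbol{\beta}'=(\beta_1,\dots,\beta_K)$ is the vector of genetic effects, and $\mathrm{vec}(\boldsymbol{\mathcal{E}})\sim N_{nK}(\mathbf{0},\mathbf{I}_n\otimes\boldsymbol{\Sigma})$ with $\boldsymbol{\Sigma}=\sigma^2\big((1-\rho)\mathbf{I}_K+\rho\mathbf{1}\mathbf{1}'\big)$, $\sigma^2>0$, and $\rho>0$ such that $\boldsymbol{\Sigma}$ is positive definite. Assume the genetic effects of the associated traits are equal in size and positive (i.e. every nonzero $\beta_k$ equals a common value $b>0$). Consider two scenarios: ''partial association'', in which exactly $u<K$ of the $\beta_k$ are nonzero, and ''complete association'', in which all $K$ of the $\beta_k$ are nonzero. For testing $H_0:\boldsymbol{\beta}=\mathbf{0}$ with the MANOVA test, the power under partial association is asymptotically larger than the power under complete association if $$\frac{u}{K} > \frac{1-\rho}{1+(K-u-1)\rho},$$ where the right-hand side equals the ratio of the second-largest to the largest eigenvalue of $\boldsymbol{\Sigma}_{K-u}$, the $(K-u)\times(K-u)$ compound-symmetry covariance matrix $\sigma^2((1-\rho)\mathbf{I}_{K-u}+\rho\mathbf{1}\mathbf{1}')$ of the $K-u$ truly unassociated traits.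
   Context: $\mathbf{Y}$ and $\mathbf{X}$ are centered. The MANOVA test (Wilks' lambda, equivalent to the likelihood ratio test under the model) of $H_0:\boldsymbol{\beta}=\mathbf{0}$ uses the statistic $-n\log\big(|\mathbf{E}|/|\mathbf{H}+\mathbf{E}|\big)$, where $\hat{\boldsymbol{\beta}}=\mathbf{Y}'\mathbf{X}(\mathbf{X}'\mathbf{X})^{-1}$, $\mathbf{H}=\hat{\boldsymbol{\beta}}(\mathbf{X}'\mathbf{X})\hat{\boldsymbol{\beta}}'$ is the hypothesis sum-of-squares-and-cross-products matrix and $\mathbf{E}=\mathbf{Y}'\mathbf{Y}-\hat{\boldsymbol{\beta}}(\mathbf{X}'\mathbf{X})\hat{\boldsymbol{\beta}}'$ the error one; under $H_0$ it is approximately $\chi^2_K$ for large $n$, and the test rejects for large values. ''Asymptotically'' refers to the large-sample ($n\to\infty$) approximation of the power. *)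

From HB Require Import structures.
From mathcomp Require Import all_boot all_order all_algebra.
From mathcomp Require Import all_classical all_reals all_analysis.
Set Implicit Arguments. Unset Strict Implicit. Unset Printing Implicit Defensive.
Import Order.TTheory GRing.Theory Num.Theory.
Local Open Scope ring_scope.

Definition cs_cov {R : pzRingType} (K : nat) (sigma2 rho : R) : 'M[R]_K :=
  sigma2 *: ((1 - rho)%:M + const_mx rho).

Definition posdef {R : numDomainType} (K : nat) (A : 'M[R]_K) : Prop :=
  A^T = A /\ forall v : 'cV[R]_K, v != 0 -> 0 < (v^T *m A *m v) 0 0.

(* chisq_tail k c a = P( a + Z_1^2 + ... + Z_k^2 > c ), Z_i iid N(0,1),
   written as iterated integrals against the standard normal law. *)
Section chisq.
Context {R : realType}.
Fixpoint chisq_tail (k : nat) (c a : R) : \bar R :=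
  match k with
  | 0 => (if c < a then 1 else 0)%:E
  | k'.+1 => (\int[normal_prob 0 1]_z chisq_tail k' c (a + z ^+ 2))%E
  end.
End chisq.

(* Upper tail P(chi^2_K(lam) > c) of the noncentral chi-square distribution
   with K >= 1 degrees of freedom and noncentrality lam >= 0, i.e. the law of
   ||Z + mu||^2 with Z ~ N_K(0, I) and ||mu||^2 = lam (mu = (sqrt lam,0,..,0)). *)
Definition ncchisq_tail {R : realType} (K : nat) (lam c : R) : \bar R :=
  (\int[normal_prob 0 1]_z chisq_tail K.-1 c ((z + Num.sqrt lam) ^+ 2))%E.

(* Non-centrality of the large-sample (local alternative) distribution of the
   MANOVA / LRT statistic -n log(|E|/|H+E|) in the model Y = X beta' + E,
   vec(E) ~ N(0, I_n (x) Sigma), with s = lim X'X/n > 0 (X centered):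
   lam = s * beta' Sigma^{-1} beta. *)
Definition manova_noncentrality {R : realType} (K : nat) (s : R)
  (Sigma : 'M[R]_K) (beta : 'cV[R]_K) : R :=
  s * (beta^T *m invmx Sigma *m beta) 0 0.

(* Asymptotic power of the MANOVA test rejecting when the statistic exceeds
   the critical value c (the upper-alpha quantile of chi^2_K):
   P(chi^2_K(lam) > c). *)
Definition manova_asym_power {R : realType} (K : nat) (s : R)
  (Sigma : 'M[R]_K) (beta : 'cV[R]_K) (c : R) : \bar R :=
  ncchisq_tail K (manova_noncentrality s Sigma beta) c.

From HB Require Import structures.
From mathcomp Require Import all_boot all_order all_algebra.
From mathcomp Require Import all_classical all_reals all_analysis.
From mathcomp Require Import measurable_realfun.
From mathcomp Require Import ring lra.

(* The asymptotic power is the upper tail at c of a noncentral chi-square law with K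
   degrees of freedom, so two facts suffice.

   First, the tail is strictly increasing in the noncentrality lam = s b' Sigma^-1 b.
   It equals E g((Z + sqrt lam)^2) where g(a) = P(a + chi2_{K-1} > c) is
   nondecreasing, strictly so below c. The densities f_m(x) = phi(x - m) + phi(x + m)
   of |Z + m| have an increasing likelihood ratio in x (cosh(m t) is log-supermodular),
   so f_m1 and f_m2 cross once, at some x0, for m1 < m2; as both have mass 2,
   2 (E g((Z+m2)^2) - E g((Z+m1)^2)) = int (g(x^2) - g(x0^2)) (f_m2 - f_m1) > 0.

   Second, Sigma^-1 is again a compound-symmetry matrix, whence for u equal effects b
   lam = s b^2 u (1 + (K - u - 1) rho) / (sigma2 (1 - rho) (1 - rho + K rho)),
   and the hypothesis on u / K says exactly that this exceeds its value at u = K. *)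

Set Implicit Arguments.
Unset Strict Implicit.
Unset Printing Implicit Defensive.

Import Order.TTheory GRing.Theory Num.Theory.
Local Open Scope ring_scope.

Section compound_symmetry.
Variables (R : comUnitRingType) (K : nat).

Definition csmx (x y : R) : 'M[R]_K := \matrix_(i, j) (x * (i == j)%:R + y).

Lemma sum_delta (i : 'I_K) (F : 'I_K -> R) : \sum_j (i == j)%:R * F j = F i.
Proof.
rewrite (bigD1 i) //= eqxx mul1r big1 ?addr0 // => j.
by rewrite eq_sym => /negbTE ->; rewrite mul0r.
Qed.

Lemma sum_delta_r (i : 'I_K) (F : 'I_K -> R) : \sum_j F j * (j == i)%:R = F i.
Proof. by rewrite -[RHS](sum_delta i); apply: eq_bigr => j _; rewrite mulrC eq_sym. Qed.

Lemma csmx1 : csmx 1 0 = 1%:M.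
Proof. by apply/matrixP => i j; rewrite !mxE mul1r addr0. Qed.

Lemma mul_csmx x1 y1 x2 y2 :
  csmx x1 y1 *m csmx x2 y2 = csmx (x1 * x2) (x1 * y2 + y1 * x2 + K%:R * y1 * y2).
Proof.
apply/matrixP => i k; rewrite !mxE.
under eq_bigr => j _ do rewrite !mxE mulrDl (mulrC x1) -mulrA.
rewrite big_split /= sum_delta.
under eq_bigr => j _ do rewrite mulrDr mulrA.
rewrite big_split /= -!mulr_sumr.
rewrite (eq_bigr (fun j => 1 * (j == k)%:R)) ?sum_delta_r; last by move=> j _; rewrite mul1r.
rewrite sumr_const card_ord -mulr_natl; ring.
Qed.

Lemma invmx_csmx x1 y1 x2 y2 :
  x1 * x2 = 1 -> x1 * y2 + y1 * x2 + K%:R * y1 * y2 = 0 ->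
  invmx (csmx x1 y1) = csmx x2 y2.
Proof.
move=> x12 xy12.
have mul1 : csmx x1 y1 *m csmx x2 y2 = 1%:M by rewrite mul_csmx x12 xy12 csmx1.
have [unit1 _] := mulmx1_unit mul1.
by rewrite -[RHS](mulKmx unit1) mul1 mulmx1.
Qed.

Lemma qform_csmx x y (v : 'cV[R]_K) :
  (v^T *m csmx x y *m v) 0 0 = x * \sum_i v i 0 ^+ 2 + y * (\sum_i v i 0) ^+ 2.
Proof.
rewrite !mxE; under eq_bigr => j _ do rewrite !mxE.
under eq_bigr => j _ do (under eq_bigr => i _ do rewrite !mxE; idtac).
have row_sum j : \sum_i v i 0 * (x * (i == j)%:R + y) = x * v j 0 + y * \sum_i v i 0.
  under eq_bigr => i _ do rewrite mulrDr mulrCA.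
  by rewrite big_split /= -mulr_sumr sum_delta_r -mulr_suml (mulrC _ y).
under eq_bigr => j _ do rewrite row_sum mulrDl -mulrA -expr2.
by rewrite big_split /= -!mulr_sumr -mulrA -expr2.
Qed.

End compound_symmetry.

Lemma cs_cov_csmx (R : comUnitRingType) K (sigma2 rho : R) :
  cs_cov K sigma2 rho = csmx K (sigma2 * (1 - rho)) (sigma2 * rho).
Proof. by apply/matrixP => i j; rewrite !mxE mulr_natr mulrDr mulrnAr. Qed.

Lemma posdef_csmx_gt0 (R : realDomainType) K (x y : R) :
  (1 < K)%N -> posdef (csmx K x y) -> 0 < x.
Proof.
move=> K_gt1 [_ pd].
(* Test the form on e_0 - e_1, whose entries sum to 0. *)
pose i0 : 'I_K := Ordinal (ltn_trans (ltn0Sn 0) K_gt1).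
pose i1 : 'I_K := Ordinal K_gt1.
pose v : 'cV[R]_K := \col_i ((i0 == i)%:R - (i1 == i)%:R).
have v_i0 : v i0 0 = 1 by rewrite !mxE eqxx /= subr0.
have v_neq0 : v != 0.
  by apply/negP => /eqP/matrixP/(_ i0 0); rewrite v_i0 mxE; exact/eqP/oner_neq0.
have := pd v v_neq0; rewrite qform_csmx.
have -> : \sum_i v i 0 = 0.
  under eq_bigr => i _ do rewrite mxE -[_%:R]mulr1 -[(i1 == i)%:R]mulr1.
  by rewrite sumrB !sum_delta subrr.
rewrite expr0n mulr0 addr0; apply: contraTT; rewrite -!leNgt => x_le0.
by rewrite mulr_le0_ge0 // sumr_ge0 // => i _; rewrite sqr_ge0.
Qed.

Section noncentrality.
Variables (R : realType) (K : nat).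

Let cs_cov_denoms_neq0 (sigma2 rho : R) : 0 < sigma2 -> 0 <= rho < 1 ->
  [&& 1 - rho + K%:R * rho != 0, 1 - rho != 0 & sigma2 != 0].
Proof.
move=> s2_gt0 /andP[rho_ge0 rho_lt1].
have D_gt0 : 0 < 1 - rho + K%:R * rho by have := mulr_ge0 (ler0n R K) rho_ge0; lra.
by rewrite !gt_eqF // subr_gt0.
Qed.

Lemma manova_noncentrality_cs_cov (sigma2 rho s : R) (beta : 'cV[R]_K) :
  0 < sigma2 -> 0 <= rho < 1 ->
  manova_noncentrality s (cs_cov K sigma2 rho) beta =
  s / (sigma2 * (1 - rho)) *
    (\sum_i beta i 0 ^+ 2 - rho / (1 - rho + K%:R * rho) * (\sum_i beta i 0) ^+ 2).
Proof.
move=> s2_gt0 rho01; have nz := cs_cov_denoms_neq0 s2_gt0 rho01.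
rewrite /manova_noncentrality cs_cov_csmx.
rewrite (@invmx_csmx _ _ _ _ (sigma2 * (1 - rho))^-1
   (- ((sigma2 * (1 - rho))^-1 * rho / (1 - rho + K%:R * rho)))).
- by rewrite qform_csmx; field.
- by field; case/and3P: nz => _ -> ->.
- by field.
Qed.

Lemma sum_equal_effects (b : R) (beta : 'cV[R]_K) u :
  (forall k, beta k 0 = 0 \/ beta k 0 = b) -> #|[set k | beta k 0 != 0]| = u ->
  \sum_i beta i 0 = u%:R * b /\ \sum_i beta i 0 ^+ 2 = u%:R * b ^+ 2.
Proof.
move=> beta01 card_u.
have betaE c i : beta i 0 ^+ c.+1 = b ^+ c.+1 *+ (beta i 0 != 0).
  case: (beta01 i) => ->; first by rewrite eqxx expr0n.
  by case: (eqVneq b 0) => [->|b_neq0]; rewrite ?eqxx ?expr0n // b_neq0.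
have sum_pow c : \sum_i beta i 0 ^+ c.+1 = u%:R * b ^+ c.+1.
  under eq_bigr do rewrite betaE mulrb.
  by rewrite -big_mkcond sumr_const -card_u cardsE mulr_natl.
by have := sum_pow 0%N; rewrite !expr1 => ->; rewrite sum_pow.
Qed.

Lemma manova_noncentrality_equal_effects (sigma2 rho s b : R) (beta : 'cV[R]_K) u :
  0 < sigma2 -> 0 <= rho < 1 ->
  (forall k, beta k 0 = 0 \/ beta k 0 = b) -> #|[set k | beta k 0 != 0]| = u ->
  manova_noncentrality s (cs_cov K sigma2 rho) beta =
  s * b ^+ 2 / (sigma2 * (1 - rho) * (1 - rho + K%:R * rho)) *
    (u%:R * (1 + (K%:R - u%:R - 1) * rho)).
Proof.
move=> s2_gt0 rho01 beta01 card_u.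
have [sum1 sum2] := sum_equal_effects beta01 card_u.
rewrite manova_noncentrality_cs_cov // sum1 sum2.
by field; exact: cs_cov_denoms_neq0.
Qed.

Lemma manova_noncentrality_partial_gt_complete (sigma2 rho s b : R)
    (beta : 'cV[R]_K) u :
  0 < sigma2 -> 0 < rho < 1 -> 0 < b -> 0 < s -> (u < K)%N ->
  (forall k, beta k 0 = 0 \/ beta k 0 = b) -> #|[set k | beta k 0 != 0]| = u ->
  (1 - rho) / (1 + (K - u - 1)%:R * rho) < u%:R / K%:R ->
  0 <= manova_noncentrality s (cs_cov K sigma2 rho) (const_mx b) <
  manova_noncentrality s (cs_cov K sigma2 rho) beta.
Proof.
move=> s2_gt0 /andP[rho_gt0 rho_lt1] b_gt0 s_gt0 u_lt_K beta01 card_u ratio_lt.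
have rho01 : 0 <= rho < 1 by rewrite ltW.
have complete01 k : (const_mx b : 'cV[R]_K) k 0 = 0 \/ (const_mx b : 'cV[R]_K) k 0 = b.
  by right; rewrite mxE.
have card_K : #|[set k | (const_mx b : 'cV[R]_K) k 0 != 0]| = K.
  rewrite -[RHS]card_ord -cardsT; congr #|pred_of_set _|.
  by apply/setP => k; rewrite !inE mxE gt_eqF.
rewrite (manova_noncentrality_equal_effects _ _ _ complete01 card_K) //.
rewrite (manova_noncentrality_equal_effects _ _ _ beta01 card_u) //.
set a := s * b ^+ 2 / _.
have a_gt0 : 0 < a.
  have D_gt0 : 0 < 1 - rho + K%:R * rho.
    by have := mulr_ge0 (ler0n R K) (ltW rho_gt0); lra.
  by rewrite divr_gt0 ?mulr_gt0 ?exprn_gt0 ?subr_gt0.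
have E_gt0 : 0 < 1 + (K - u - 1)%:R * rho.
  by have := mulr_ge0 (ler0n R (K - u - 1)) (ltW rho_gt0); lra.
have natE : (K - u - 1)%:R = K%:R - u%:R - 1 :> R.
  by rewrite -subnDA natrB ?natrD ?opprD ?addrA // addn1.
have K_gt0 : 0 < K%:R :> R by rewrite ltr0n (leq_ltn_trans _ u_lt_K).
rewrite -natE subrr sub0r mulN1r !pmulr_rge0 // subr_ge0 ltW //= ltr_pM2l // mulrC.
by move: ratio_lt; rewrite ltr_pdivrMr // mulrAC ltr_pdivlMr.
Qed.

End noncentrality.

Section lebesgue_integral.
Context {R : realType}.
Local Open Scope classical_set_scope.
Local Notation mu := (@lebesgue_measure R).
Local Open Scope ereal_scope.

Lemma lebesgue_measure_shift (m : R) (A : set R) : measurable A ->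
  pushforward mu ((fun x => (x + m)%R) : _ -> measurableTypeR R) A = mu A.
Proof.
move=> mA; apply/esym/lebesgue_measure_unique => //=; first exact: measurable_funD.
move=> _ _ [[a b]] _ <-; rewrite /pushforward.
have -> : (fun x : R => (x + m)%R) @^-1` `]a, b]%classic = `](a - m)%R, (b - m)%R]%classic.
  by apply/seteqP; split => x /=; rewrite !in_itv /= ltrBlDr lerBrDr.
rewrite !lebesgue_measure_itv /= !lte_fin ltrD2r.
by case: ifP => // _; rewrite -!EFinD; congr (_%:E); ring.
Qed.

Lemma ge0_integral_shift (f : R -> \bar R) (m : R) :
  measurable_fun setT f -> (forall x, 0 <= f x) ->
  \int[mu]_x f (x + m)%R = \int[mu]_x f x.
Proof.
move=> mf f0; pose shift : measurableTypeR R -> measurableTypeR R := +%R^~ m.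
have mshift : measurable_fun setT shift by exact: measurable_funD.
have := ge0_integral_pushforward mshift mu measurableT mf (fun y _ => f0 y).
rewrite preimage_setT -[X in _ = X -> _]/(\int[mu]_x f (x + m)%R) => <-.
by apply: eq_measure_integral => A mA _; exact: lebesgue_measure_shift.
Qed.

Lemma ge0_integral_reflect (f : R -> \bar R) :
  measurable_fun setT f -> (forall x, 0 <= f x) ->
  \int[mu]_x f (- x)%R = \int[mu]_x f x.
Proof.
move=> mf f0; pose opp : measurableTypeR R -> measurableTypeR R := -%R.
have mopp : measurable_fun setT opp by exact: measurable_funN.
have := ge0_integral_pushforward mopp mu measurableT mf (fun y _ => f0 y).
rewrite preimage_setT -[X in _ = X -> _]/(\int[mu]_x f (- x)%R) => <-.
by apply: eq_measure_integral => A mA _; exact: lebesgue_measureN.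
Qed.

Lemma ge0_integralD_EFin (f g : R -> R) :
  measurable_fun setT f -> measurable_fun setT g ->
  (forall x, 0 <= f x)%R -> (forall x, 0 <= g x)%R ->
  \int[mu]_x ((f x + g x)%R)%:E = \int[mu]_x (f x)%:E + \int[mu]_x (g x)%:E.
Proof.
move=> mf mg f0 g0; under eq_integral do rewrite EFinD.
by rewrite ge0_integralD // => [x _||x _|]; rewrite ?lee_fin //; exact/measurable_EFinP.
Qed.

Lemma integral_gt0_itv (f : R -> R) (l r : R) :
  measurable_fun setT f -> (forall x, 0 <= f x)%R -> (l < r)%R ->
  (forall x, l < x < r -> 0 < f x)%R -> 0 < \int[mu]_x (f x)%:E.
Proof.
move=> mf f0 lr f_gt0.
rewrite lt0e integral_ge0 ?andbT; last by move=> x _; rewrite lee_fin.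
apply/negP => /eqP int0.
have [N [mN N0 fN]] : ae_eq mu setT (EFin \o f) (cst 0).
  apply/ae_eq_integral_abs => //; first exact/measurable_EFinP.
  by rewrite -[RHS]int0; apply: eq_integral => x _ /=; rewrite ?abse_EFin ?ger0_norm.
have itv_sub : `]l, r[%classic `<=` N.
  move=> x; rewrite /= in_itv /= => /f_gt0 fx_gt0; apply: fN => /= /(_ I) /eqP.
  by rewrite eqe gt_eqF.
have : mu `]l, r[%classic = 0 by exact: subset_measure0 _ mN itv_sub N0.
by rewrite lebesgue_measure_itv /= lte_fin lr -EFinD => /eqP; rewrite eqe subr_eq0 gt_eqF.
Qed.

End lebesgue_integral.

Section probability_integral.
Local Open Scope ereal_scope.

Lemma integral_prob_ge0_le1 d (T : measurableType d) (R : realType)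
    (P : probability T R) (f : T -> \bar R) :
  measurable_fun setT f -> (forall x, 0 <= f x <= 1) -> 0 <= \int[P]_x f x <= 1.
Proof.
move=> mf f01; apply/andP; split.
  by apply: integral_ge0 => x _; have /andP[] := f01 x.
have <- : \int[P]_x cst 1 x = 1 by rewrite integral_cst //= mul1e probability_setT.
by apply: ge0_le_integral => // x _; have /andP[] := f01 x.
Qed.

End probability_integral.

Section sqrt_sqr.
Variable R : rcfType.

Lemma sqrt_ltr_sqr (m z : R) : 0 <= z -> Num.sqrt m < z -> m < z ^+ 2.
Proof.
move=> z_ge0 sqrt_lt; have [m_lt0|m_ge0] := ltP m 0.
  exact: lt_le_trans m_lt0 (sqr_ge0 z).
by rewrite -(sqr_sqrtr m_ge0) ltr_pXn2r ?nnegrE ?sqrtr_ge0.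
Qed.

Lemma sqr_ltr_sqrt (m z : R) : 0 <= z -> z < Num.sqrt m -> z ^+ 2 < m.
Proof.
move=> z_ge0 lt_sqrt; have [m_le0|m_gt0] := leP m 0.
  by move: lt_sqrt; rewrite ler0_sqrtr // ltNge z_ge0.
by rewrite -(sqr_sqrtr (ltW m_gt0)) ltr_pXn2r ?nnegrE ?sqrtr_ge0.
Qed.

End sqrt_sqr.

Section standard_normal.
Context {R : realType}.
Local Notation mu := (@lebesgue_measure R).
Local Notation N := (@normal_prob R 0 1).
Local Notation phi := (normal_pdf (0 : R) 1).

Lemma normal_pdf01E (x : R) : phi x = normal_peak 1 * expR (- (x ^+ 2) / 2).
Proof. by rewrite /normal_pdf oner_eq0 /= /normal_fun subr0 expr1n. Qed.

Lemma normal_pdf01_gt0 (x : R) : 0 < phi x.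
Proof. by rewrite normal_pdf01E mulr_gt0 ?expR_gt0 ?normal_peak_gt0 ?oner_eq0. Qed.

Lemma normal_pdf01N (x : R) : phi (- x) = phi x.
Proof. by rewrite !normal_pdf01E sqrrN. Qed.

Local Open Scope ereal_scope.

Lemma integral_normal_prob01 (f : R -> R) : measurable_fun setT f ->
  (forall x, 0 <= f x <= 1)%R ->
  \int[N]_x (f x)%:E = \int[mu]_x ((f x * phi x)%R)%:E.
Proof.
move=> mf f01; have mfE : measurable_fun setT (EFin \o f) by exact/measurable_EFinP.
have N_dom := @normal_prob_dominates R 0 1.
have f_int : N.-integrable setT (EFin \o f).
  apply/integrableP; split => //; apply: (@le_lt_trans _ _ 1); last by rewrite ltry.
  have abs01 x : 0 <= `|(f x)%:E| <= 1.
    by have /andP[f0 f1] := f01 x; rewrite abse_EFin ger0_norm // !lee_fin f0 f1.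
  have mabs := measurableT_comp (@abse_measurable R setT) mfE.
  by have /andP[] := integral_prob_ge0_le1 N mabs abs01.
under [RHS]eq_integral do rewrite EFinM.
rewrite -(Radon_Nikodym_change_of_variables N_dom measurableT f_int).
apply: ae_eq_integral => //.
- apply: emeasurable_funM => //; apply: (measurable_int mu).
- apply: emeasurable_funM => //=; apply/measurableT_comp => //=.
  exact: measurable_normal_pdf.
- apply: ae_eqe_mul2l => /=.
  rewrite Radon_NikodymE //=; case: cid => /= h [h0 h_int hE].
  apply: integral_ae_eq => //=.
  + by apply/measurableT_comp => //; exact: measurable_normal_pdf.
  + by move=> E _ mE; rewrite -hE.
Qed.

Lemma integral_normal_prob01_fin_num (f : R -> R) : measurable_fun setT f ->
  (forall x, 0 <= f x <= 1)%R -> \int[N]_x (f x)%:E \is a fin_num.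
Proof.
move=> mf f01; have mfE : measurable_fun setT (EFin \o f) by exact/measurable_EFinP.
have /andP[int_ge0 int_le1] := integral_prob_ge0_le1 N mfE (fun x => f01 x).
by rewrite ge0_fin_numE // (le_lt_trans int_le1) ?ltry.
Qed.

Lemma lt_integral_normal_prob01 (f g : R -> R) (l r : R) :
  measurable_fun setT f -> measurable_fun setT g ->
  (forall x, 0 <= f x <= g x)%R -> (forall x, g x <= 1)%R ->
  (l < r)%R -> (forall x, l < x < r -> f x < g x)%R ->
  \int[N]_x (f x)%:E < \int[N]_x (g x)%:E.
Proof.
move=> mf mg fg g1 lr f_lt_g.
have f01 x : (0 <= f x <= 1)%R.
  by have /andP[-> f_le_g] := fg x; rewrite (le_trans f_le_g (g1 x)).
have gf01 x : (0 <= g x - f x <= 1)%R.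
  by have /andP[f0 f_le_g] := fg x; rewrite subr_ge0 f_le_g /=; have := g1 x; lra.
have mgf : measurable_fun setT (fun x => g x - f x)%R by exact: measurable_funB.
have -> : \int[N]_x (g x)%:E = \int[N]_x (f x)%:E + \int[N]_x ((g x - f x)%R)%:E.
  rewrite -ge0_integralD //; first by apply: eq_integral => x _; rewrite -EFinD subrKC.
  - by move=> x _; have /andP[] := f01 x.
  - exact/measurable_EFinP.
  - by move=> x _; have /andP[] := gf01 x.
  - exact/measurable_EFinP.
rewrite lteDl ?integral_normal_prob01_fin_num // integral_normal_prob01 //.
apply: (integral_gt0_itv _ _ lr).
- by apply: measurable_funM => //; exact: measurable_normal_pdf.
- by move=> x; rewrite mulr_ge0 ?normal_pdf_ge0 //; have /andP[] := gf01 x.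
- by move=> x /f_lt_g fx_lt_gx; rewrite mulr_gt0 ?normal_pdf01_gt0 // subr_gt0.
Qed.

End standard_normal.

Definition chisq_tailR {R : realType} (k : nat) (c a : R) : R := fine (chisq_tail k c a).

Section chisq_tail.
Context {R : realType}.
Variable c : R.
Local Notation N := (@normal_prob R 0 1).

Lemma measurable_add_sqr (a : R) (f : R -> R) : measurable_fun setT f ->
  measurable_fun setT (fun z : R => f (a + z ^+ 2)).
Proof. by move=> mf; apply: measurableT_comp mf _; apply: measurable_funD. Qed.

Lemma chisq_tail_ge0_le1_homo k :
  (forall a, (0 <= chisq_tail k c a <= 1)%E) /\
  {homo chisq_tail k c : a b / a <= b >-> (a <= b)%E}.
Proof.
elim: k => [|k [tail01 tail_homo]] /=.
  split => [a|a b ab]; first by case: ltP; rewrite !lee_fin ?lexx ?ler01.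
  by rewrite lee_fin; case: ltP => h1; case: ltP => h2; lra.
pose g a := fine (chisq_tail k c a).
have tailE a : chisq_tail k c a = (g a)%:E.
  by have /andP[t0 t1] := tail01 a; rewrite fineK // ge0_fin_numE // (le_lt_trans t1) ?ltry.
have mg : measurable_fun setT g.
  by apply: nondecreasing_measurable => // a b /tail_homo; rewrite !tailE lee_fin.
have mtail (a : R) : measurable_fun setT (fun z : R => chisq_tail k c (a + z ^+ 2)).
  rewrite (_ : (fun z => _) = EFin \o (fun z => g (a + z ^+ 2))).
    by apply/measurable_EFinP; exact: measurable_add_sqr.
  by apply/funext => z; rewrite /= tailE.
split => [a|a b ab].
  by have := integral_prob_ge0_le1 N (mtail a) (fun z => tail01 _).
apply: ge0_le_integral => //.
- by move=> z _; have /andP[] := tail01 (a + z ^+ 2).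
- exact: mtail.
- exact: mtail.
- by move=> z _; apply: tail_homo; rewrite lerD2r.
Qed.

Lemma chisq_tailE k a : chisq_tail k c a = (chisq_tailR k c a)%:E.
Proof.
have /andP[t0 t1] := (chisq_tail_ge0_le1_homo k).1 a.
by rewrite fineK // ge0_fin_numE // (le_lt_trans t1) ?ltry.
Qed.

Lemma chisq_tailR_ge0_le1 k a : 0 <= chisq_tailR k c a <= 1.
Proof. by have := (chisq_tail_ge0_le1_homo k).1 a; rewrite chisq_tailE !lee_fin. Qed.

Lemma nondecreasing_chisq_tailR k : {homo chisq_tailR k c : a b / a <= b}.
Proof.
by move=> a b /(chisq_tail_ge0_le1_homo k).2; rewrite !chisq_tailE lee_fin.
Qed.

Lemma measurable_chisq_tailR k : measurable_fun setT (chisq_tailR k c).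
Proof. exact: nondecreasing_measurable (nondecreasing_chisq_tailR k). Qed.

Lemma chisq_tailS_lt k (a b l r : R) : a <= b -> l < r ->
  (forall x, l < x < r -> chisq_tailR k c (a + x ^+ 2) < chisq_tailR k c (b + x ^+ 2)) ->
  chisq_tailR k.+1 c a < chisq_tailR k.+1 c b.
Proof.
move=> ab lr lt_lr; rewrite -lte_fin -!chisq_tailE /=.
under eq_integral do rewrite chisq_tailE.
under [X in (_ < X)%E]eq_integral do rewrite chisq_tailE.
apply: (@lt_integral_normal_prob01 _ (fun x => chisq_tailR k c (a + x ^+ 2))
  (fun x => chisq_tailR k c (b + x ^+ 2)) l r) => //.
- by apply: measurable_add_sqr; exact: measurable_chisq_tailR.
- by apply: measurable_add_sqr; exact: measurable_chisq_tailR.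
- move=> x; have /andP[-> _] := chisq_tailR_ge0_le1 k (a + x ^+ 2).
  by apply: nondecreasing_chisq_tailR; rewrite lerD2r.
- by move=> x; have /andP[] := chisq_tailR_ge0_le1 k (b + x ^+ 2).
Qed.

Lemma chisq_tailR_lt k (a b : R) : (0 < k)%N -> a < c -> a < b ->
  chisq_tailR k c a < chisq_tailR k c b.
Proof.
case: k => // k _; elim: k a b => [|k IH] a b ac ab.
  (* On this interval a + x^2 < c < b + x^2. *)
  apply: (@chisq_tailS_lt 0 a b (Num.sqrt (Num.max (c - b) 0)) (Num.sqrt (c - a))).
  - exact: ltW.
  - by rewrite ltr_sqrt ?subr_gt0 // gt_max; apply/andP; split; lra.
  move=> x /andP[lx xr]; have x_ge0 : 0 <= x := le_trans (sqrtr_ge0 _) (ltW lx).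
  have x2_gt := sqrt_ltr_sqr x_ge0 lx; have x2_lt := sqr_ltr_sqrt x_ge0 xr.
  have : c - b <= Num.max (c - b) 0 by rewrite le_max lexx.
  rewrite /chisq_tailR /= => max_ge.
  by case: (ltP c (a + x ^+ 2)) => h1; case: (ltP c (b + x ^+ 2)) => h2; lra.
apply: (@chisq_tailS_lt k.+1 a b 0 (Num.sqrt (c - a))).
- exact: ltW.
- by rewrite sqrtr_gt0 subr_gt0.
move=> x /andP[x_gt0 xr]; have := sqr_ltr_sqrt (ltW x_gt0) xr.
by move=> x2_lt; apply: IH; lra.
Qed.

End chisq_tail.

Section two_cosh.
Variable R : realType.

Definition two_cosh (x : R) := expR x + expR (- x).

Lemma two_cosh_gt0 x : 0 < two_cosh x.
Proof. by rewrite addr_gt0 ?expR_gt0. Qed.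

Lemma two_cosh_norm x : two_cosh `|x| = two_cosh x.
Proof.
have [x_ge0|x_lt0] := leP 0 x; first by rewrite ger0_norm.
by rewrite ltr0_norm // /two_cosh opprK addrC.
Qed.

Lemma two_coshB a b : two_cosh b - two_cosh a =
  (expR b - expR a) * (expR a * expR b - 1) / (expR a * expR b).
Proof.
rewrite /two_cosh !expRN; have := expR_gt0 a; have := expR_gt0 b.
by move=> b_gt0 a_gt0; field; rewrite !gt_eqF.
Qed.

Lemma ler_two_cosh a b : 0 <= a <= b -> two_cosh a <= two_cosh b.
Proof.
move=> /andP[a_ge0 ab]; rewrite -subr_ge0 two_coshB divr_ge0 ?mulr_ge0 ?expR_ge0 //=.
  by rewrite subr_ge0 ler_expR.
by rewrite subr_ge0 -expRD -expR0 ler_expR; lra.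
Qed.

Lemma ltr_two_cosh a b : 0 <= a < b -> two_cosh a < two_cosh b.
Proof.
move=> /andP[a_ge0 ab]; rewrite -subr_gt0 two_coshB divr_gt0 ?mulr_gt0 ?expR_gt0 //=.
  by rewrite subr_gt0 ltr_expR.
by rewrite subr_gt0 -expRD -expR0 ltr_expR; lra.
Qed.

Lemma ler_two_cosh_sqr x y : x ^+ 2 <= y ^+ 2 -> two_cosh x <= two_cosh y.
Proof.
move=> le_sqr; rewrite -two_cosh_norm -[two_cosh y]two_cosh_norm ler_two_cosh //.
by rewrite normr_ge0 -ler_sqr ?nnegrE // !real_normK ?num_real.
Qed.

Lemma two_coshM x y : two_cosh x * two_cosh y = two_cosh (x + y) + two_cosh (x - y).
Proof.
rewrite /two_cosh !expRN !expRD !expRN; have := expR_gt0 x; have := expR_gt0 y.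
by move=> y_gt0 x_gt0; field; rewrite !gt_eqF.
Qed.

Lemma two_cosh_supermodular m1 m2 s t : 0 <= m1 < m2 -> 0 <= s < t ->
  two_cosh (m2 * s) * two_cosh (m1 * t) < two_cosh (m2 * t) * two_cosh (m1 * s).
Proof.
move=> /andP[m1_ge0 m12] /andP[s_ge0 st]; rewrite !two_coshM.
apply: ltr_leD.
  apply: ltr_two_cosh; rewrite addr_ge0 ?mulr_ge0 /=; try lra.
  have : 0 < (m2 - m1) * (t - s) by rewrite mulr_gt0 // subr_gt0.
  nra.
apply: ler_two_cosh_sqr.
have : 0 <= (m2 ^+ 2 - m1 ^+ 2) * (t ^+ 2 - s ^+ 2).
  by apply: mulr_ge0; rewrite subr_ge0 ler_sqr ?nnegrE //; lra.
nra.
Qed.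

End two_cosh.

Section folded_ratio.
Variable R : realType.
Local Open Scope classical_set_scope.

(* Up to a factor independent of m, the density of |Z + m| at t >= 0, Z standard
   normal; see [folded_normal_pdfE]. *)
Definition folded_ratio (m t : R) := expR (- (m ^+ 2) / 2) * two_cosh (m * t).

Lemma folded_ratio_gt0 m t : 0 < folded_ratio m t.
Proof. by rewrite mulr_gt0 ?expR_gt0 ?two_cosh_gt0. Qed.

Lemma folded_ratio_norm m t : 0 <= m -> folded_ratio m `|t| = folded_ratio m t.
Proof.
by move=> m_ge0; rewrite /folded_ratio -[two_cosh (m * t)]two_cosh_norm normrM ger0_norm.
Qed.

Variables (m1 m2 : R).
Hypothesis m12 : 0 <= m1 < m2.

Lemma folded_ratio_supermodular s t : 0 <= s < t ->
  folded_ratio m2 s * folded_ratio m1 t < folded_ratio m2 t * folded_ratio m1 s.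
Proof.
move=> st; rewrite /folded_ratio mulrACA [X in _ < X]mulrACA ltr_pM2l ?mulr_gt0 ?expR_gt0 //.
exact: two_cosh_supermodular.
Qed.

Lemma folded_ratio_lt_left s t : 0 <= s < t ->
  folded_ratio m2 t < folded_ratio m1 t -> folded_ratio m2 s < folded_ratio m1 s.
Proof.
move=> st lt_t; rewrite -(ltr_pM2r (folded_ratio_gt0 m1 t)).
by rewrite (lt_trans (folded_ratio_supermodular st)) // mulrC ltr_pM2l ?folded_ratio_gt0.
Qed.

Lemma folded_ratio_lt_right s t : 0 <= s < t ->
  folded_ratio m1 s <= folded_ratio m2 s -> folded_ratio m1 t < folded_ratio m2 t.
Proof.
move=> st le_s; rewrite -(ltr_pM2r (folded_ratio_gt0 m2 s)) mulrC.
by rewrite (lt_le_trans (folded_ratio_supermodular st)) // ler_pM2l ?folded_ratio_gt0.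
Qed.

Lemma folded_ratio0_lt : folded_ratio m2 0 < folded_ratio m1 0.
Proof.
rewrite /folded_ratio !mulr0 ltr_pM2r ?two_cosh_gt0 // ltr_expR.
have /andP[m1_ge0 m1_lt] := m12.
have : m1 ^+ 2 < m2 ^+ 2 by rewrite ltr_pXn2r // ?nnegrE; lra.
lra.
Qed.

Lemma folded_ratio_eventually_le : exists2 T, 0 <= T & folded_ratio m1 T <= folded_ratio m2 T.
Proof.
have /andP[m1_ge0 m1_lt] := m12.
have dm_gt0 : 0 < m2 - m1 by rewrite subr_gt0.
have sq_ge0 : 0 <= m2 ^+ 2 - m1 ^+ 2 by rewrite subr_ge0 ler_pXn2r ?nnegrE //; lra.
pose T := (1 + (m2 ^+ 2 - m1 ^+ 2) / 2) / (m2 - m1).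
have T_gt0 : 0 < T by rewrite divr_gt0 //; lra.
exists T; first exact: ltW.
have : expR (- (m2 ^+ 2) / 2) * expR (m2 * T) =
       expR 1 * (expR (- (m1 ^+ 2) / 2) * expR (m1 * T)).
  by rewrite -!expRD; congr expR; rewrite /T; field; rewrite gt_eqF.
rewrite /folded_ratio /two_cosh !expRN.
set e1 := expR (- (m1 ^+ 2) / 2); set e2 := expR (- (m2 ^+ 2) / 2).
set x := expR (m1 * T); set y := expR (m2 * T) => E2.
have e1_gt0 : 0 < e1 by exact: expR_gt0.
have e2_gt0 : 0 < e2 by exact: expR_gt0.
have x_ge1 : 1 <= x by rewrite /x -expR0 ler_expR mulr_ge0 // ltW.
have y_ge1 : 1 <= y by rewrite /y -expR0 ler_expR mulr_ge0 //; lra.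
have e_ge2 : 2 <= expR 1 :> R by have := expR_ge1Dx (1 : R); lra.
have x_gt0 : 0 < x by exact: expR_gt0.
have xV_le : x^-1 <= x by rewrite (le_trans _ x_ge1) // invf_le1.
have yV_ge0 : 0 <= y^-1 by rewrite invr_ge0; lra.
have : e1 * (x + x^-1) <= e1 * (2 * x) by rewrite ler_pM2l //; lra.
have : e2 * y <= e2 * (y + y^-1) by rewrite ler_pM2l //; lra.
have : e1 * (2 * x) <= expR 1 * (e1 * x).
  have : 0 < e1 * x by rewrite mulr_gt0.
  nra.
lra.
Qed.

Lemma folded_ratio_single_crossing : exists2 x0, 0 <= x0 &
  (forall t, 0 <= t < x0 -> folded_ratio m2 t < folded_ratio m1 t) /\
  (forall t, x0 < t -> folded_ratio m1 t < folded_ratio m2 t).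
Proof.
have [T T_ge0 le_T] := folded_ratio_eventually_le.
pose S := [set t | 0 <= t /\ folded_ratio m2 t < folded_ratio m1 t].
have S0 : S 0 by split => //; exact: folded_ratio0_lt.
have ubT : ubound S T.
  move=> t [t_ge0 lt_t]; rewrite leNgt; apply/negP => Tt.
  by have := folded_ratio_lt_left (introT andP (conj T_ge0 Tt)) lt_t; lra.
have le_sup := ub_le_sup (ex_intro _ T ubT : has_ubound S).
exists (sup S); first exact: le_sup.
split => [t /andP[t_ge0 t_lt]|t sup_lt].
  have [y [y_ge0 lt_y] ty] := sup_gt (ex_intro _ 0 S0) t_lt.
  by apply: folded_ratio_lt_left lt_y; rewrite t_ge0.
have sup_ge0 := le_sup 0 S0.
pose y := (sup S + t) / 2.
have y_ge0 : 0 <= y by rewrite /y; lra.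
have sup_lt_y : sup S < y by rewrite /y; lra.
apply: (@folded_ratio_lt_right y); first by apply/andP; split; rewrite // /y; lra.
rewrite leNgt; apply/negP => lt_y.
by have := le_sup y (conj y_ge0 lt_y); lra.
Qed.

Lemma folded_ratio_sign_agreement (g : R -> R) (c : R) : 0 < c ->
  {homo g : a b / a <= b} -> (forall u v, u < c -> u < v -> g u < g v) ->
  exists y l r, l < r /\
    (forall x, 0 <= (g (x ^+ 2) - g y) * (folded_ratio m2 x - folded_ratio m1 x)) /\
    (forall x, l < x < r -> 0 < (g (x ^+ 2) - g y) * (folded_ratio m2 x - folded_ratio m1 x)).
Proof.
move=> c_gt0 g_homo g_lt; have /andP[m1_ge0 m1_lt] := m12.
have m2_ge0 : 0 <= m2 by lra.
have [x0 x0_ge0 [before after]] := folded_ratio_single_crossing.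
have ltr_sqr (x y : R) : 0 <= x -> x < y -> x ^+ 2 < y ^+ 2.
  by move=> x_ge0 xy; rewrite ltr_pXn2r ?nnegrE //; lra.
exists (x0 ^+ 2).
have agree x : 0 <= (g (x ^+ 2) - g (x0 ^+ 2)) * (folded_ratio m2 x - folded_ratio m1 x).
  rewrite -(folded_ratio_norm x m1_ge0) -(folded_ratio_norm x m2_ge0).
  rewrite -(real_normK (num_real x)); have x_ge0 := normr_ge0 x.
  case: (ltgtP `|x| x0) => [x_lt|x_gt|->]; last by rewrite subrr mul0r.
  - have := before _ (introT andP (conj x_ge0 x_lt)).
    have := g_homo _ _ (ltW (ltr_sqr _ _ x_ge0 x_lt)).
    by move=> *; apply: mulr_le0; lra.
  - have := after _ x_gt; have := g_homo _ _ (ltW (ltr_sqr _ _ x0_ge0 x_gt)).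
    by move=> *; apply: mulr_ge0; lra.
have [x0_lt|c_le] := ltP (x0 ^+ 2) c.
- exists x0, (Num.sqrt c); split; first by rewrite -(ger0_norm x0_ge0) -sqrtr_sqr ltr_sqrt.
  split => // x /andP[x0_lt_x x_lt].
  have := after _ x0_lt_x; have := g_lt _ _ x0_lt (ltr_sqr _ _ x0_ge0 x0_lt_x).
  by move=> *; apply: mulr_gt0; lra.
- exists 0, (Num.sqrt c); split; first by rewrite sqrtr_gt0.
  split => // x /andP[x_gt0 x_lt].
  have x2_lt := sqr_ltr_sqrt (ltW x_gt0) x_lt.
  have sqrt_le : Num.sqrt c <= x0.
    by rewrite -(ger0_norm x0_ge0) -sqrtr_sqr ler_sqrt // sqr_ge0.
  have := before x ltac:(apply/andP; split; lra).
  have := g_lt _ (x0 ^+ 2) x2_lt ltac:(lra).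
  by move=> *; rewrite -mulrNN mulr_gt0 // oppr_gt0 subr_lt0.
Qed.

End folded_ratio.

Definition normal_sqr_mean {R : realType} (g : R -> R) (m : R) : \bar R :=
  (\int[normal_prob 0 1]_z (g ((z + m) ^+ 2))%:E)%E.

Definition folded_normal_pdf {R : realType} (m x : R) : R :=
  normal_pdf 0 1 (x - m) + normal_pdf 0 1 (x + m).

Section normal_sqr_mean.
Context {R : realType}.
Local Notation mu := (@lebesgue_measure R).
Local Notation phi := (normal_pdf (0 : R) 1).

Lemma folded_normal_pdfE (m x : R) :
  folded_normal_pdf m x = normal_peak 1 * expR (- (x ^+ 2) / 2) * folded_ratio m x.
Proof.
rewrite /folded_normal_pdf !normal_pdf01E /folded_ratio /two_cosh -!mulrA -mulrDr.
congr (_ * _); rewrite mulrCA !mulrDr -!expRD.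
by congr (expR _ + expR _); field.
Qed.

Lemma measurable_normal_pdf01_shift (m : R) : measurable_fun setT (fun x : R => phi (x + m)).
Proof. by apply: measurableT_comp (measurable_normal_pdf _ _) _; exact: measurable_funD. Qed.

Lemma measurable_folded_normal_pdf (m : R) : measurable_fun setT (@folded_normal_pdf R m).
Proof. by apply: measurable_funD; exact: measurable_normal_pdf01_shift. Qed.

Lemma folded_normal_pdf_ge0 (m x : R) : 0 <= folded_normal_pdf m x.
Proof. by rewrite addr_ge0 ?normal_pdf_ge0. Qed.

Local Open Scope ereal_scope.

Lemma integral_normal_pdf01_shift (m : R) : \int[mu]_x (phi (x + m))%:E = 1.
Proof.
rewrite (@ge0_integral_shift _ (fun x => (phi x)%:E)) ?integral_normal_pdf //.
- by apply/measurable_EFinP; exact: measurable_normal_pdf.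
- by move=> x; rewrite lee_fin normal_pdf_ge0.
Qed.

Lemma integral_scaled_folded_normal_pdf (C m : R) : (0 <= C)%R ->
  \int[mu]_x ((C * folded_normal_pdf m x)%R)%:E = (C * 2)%:E.
Proof.
move=> C_ge0; under eq_integral do rewrite EFinM.
rewrite ge0_integralZl_EFin //; last 2 first.
- by move=> x _; rewrite lee_fin folded_normal_pdf_ge0.
- by apply/measurable_EFinP; exact: measurable_folded_normal_pdf.
rewrite ge0_integralD_EFin ?integral_normal_pdf01_shift //.
- exact: measurable_normal_pdf01_shift.
- exact: measurable_normal_pdf01_shift.
- by move=> x; rewrite normal_pdf_ge0.
- by move=> x; rewrite normal_pdf_ge0.
Qed.

Variable g : R -> R.
Hypothesis mg : measurable_fun setT g.
Hypothesis g01 : forall a, (0 <= g a <= 1)%R.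

Let g_ge0 a : (0 <= g a)%R. Proof. by have /andP[] := g01 a. Qed.

Let measurable_g_sqr : measurable_fun setT (fun x : R => g (x ^+ 2)).
Proof. by apply: measurableT_comp mg _; exact: measurable_funX. Qed.

Let measurable_g_sqr_pdf (m : R) :
  measurable_fun setT (fun x : R => g (x ^+ 2) * phi (x + m))%R.
Proof. exact: measurable_funM measurable_g_sqr (measurable_normal_pdf01_shift m). Qed.

Let g_sqr_pdf_ge0 (m x : R) : (0 <= g (x ^+ 2) * phi (x + m))%R.
Proof. by rewrite mulr_ge0 ?normal_pdf_ge0. Qed.

Lemma normal_sqr_meanE (m : R) :
  normal_sqr_mean g m = \int[mu]_x ((g (x ^+ 2) * phi (x - m))%R)%:E.
Proof.
rewrite /normal_sqr_mean integral_normal_prob01 //; last first.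
  by apply: measurableT_comp mg _; apply: measurable_funX; exact: measurable_funD.
rewrite -(@ge0_integral_shift _ (fun x => ((g (x ^+ 2) * phi (x - m))%R)%:E) m).
- by apply: eq_integral => x _; rewrite addrK.
- by apply/measurable_EFinP; have := measurable_g_sqr_pdf (- m).
- by move=> x; rewrite lee_fin g_sqr_pdf_ge0.
Qed.

Lemma normal_sqr_mean_fin_num (m : R) : normal_sqr_mean g m \is a fin_num.
Proof.
apply: integral_normal_prob01_fin_num; last by move=> z; exact: g01.
by apply: measurableT_comp mg _; apply: measurable_funX; exact: measurable_funD.
Qed.

Lemma normal_sqr_mean_folded (m : R) : normal_sqr_mean g m + normal_sqr_mean g m =
  \int[mu]_x ((g (x ^+ 2) * folded_normal_pdf m x)%R)%:E.
Proof.
have reflect : normal_sqr_mean g m = \int[mu]_x ((g (x ^+ 2) * phi (x + m))%R)%:E.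
  rewrite normal_sqr_meanE -ge0_integral_reflect.
  - by apply: eq_integral => x _; rewrite sqrrN -opprD normal_pdf01N.
  - by apply/measurable_EFinP; have := measurable_g_sqr_pdf (- m).
  - by move=> x; rewrite lee_fin g_sqr_pdf_ge0.
rewrite {2}reflect normal_sqr_meanE -ge0_integralD_EFin.
- by apply: eq_integral => x _; rewrite /folded_normal_pdf mulrDr.
- by have := measurable_g_sqr_pdf (- m).
- exact: measurable_g_sqr_pdf.
- by move=> x; rewrite g_sqr_pdf_ge0.
- exact: g_sqr_pdf_ge0.
Qed.

(* Both folded densities have mass 2, so 2 E g((Z+m2)^2) - 2 E g((Z+m1)^2) is the
   integral of (g(x^2) - C)(f_m2 - f_m1) whatever the constant C. *)
Lemma normal_sqr_mean_lt_of_sign (C m1 m2 l r : R) : (0 <= C)%R -> (l < r)%R ->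
  (forall x, 0 <= (g (x ^+ 2) - C) * (folded_normal_pdf m2 x - folded_normal_pdf m1 x))%R ->
  (forall x, l < x < r ->
     0 < (g (x ^+ 2) - C) * (folded_normal_pdf m2 x - folded_normal_pdf m1 x))%R ->
  normal_sqr_mean g m1 < normal_sqr_mean g m2.
Proof.
move=> C_ge0 lr D_ge0 D_gt0.
set D := fun x => ((g (x ^+ 2) - C) * (folded_normal_pdf m2 x - folded_normal_pdf m1 x))%R.
have mD : measurable_fun setT D.
  by apply: measurable_funM; apply: measurable_funB => //;
    exact: measurable_folded_normal_pdf.
have mgf m : measurable_fun setT (fun x : R => g (x ^+ 2) * folded_normal_pdf m x)%R.
  exact: measurable_funM measurable_g_sqr (measurable_folded_normal_pdf m).
have mCf m : measurable_fun setT (fun x : R => C * folded_normal_pdf m x)%R.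
  exact: measurable_funM (measurable_cst C) (measurable_folded_normal_pdf m).
have gf_ge0 m x : (0 <= g (x ^+ 2) * folded_normal_pdf m x)%R.
  by rewrite mulr_ge0 ?folded_normal_pdf_ge0.
have Cf_ge0 m x : (0 <= C * folded_normal_pdf m x)%R.
  by rewrite mulr_ge0 ?folded_normal_pdf_ge0.
have : \int[mu]_x ((g (x ^+ 2) * folded_normal_pdf m2 x + C * folded_normal_pdf m1 x)%R)%:E =
       \int[mu]_x ((g (x ^+ 2) * folded_normal_pdf m1 x + C * folded_normal_pdf m2 x
                    + D x)%R)%:E.
  by apply: eq_integral => x _; rewrite /D; congr (_%:E); ring.
rewrite !ge0_integralD_EFin //; last 2 first.
- exact: measurable_funD.
- by move=> x; rewrite addr_ge0.
rewrite -!normal_sqr_mean_folded !integral_scaled_folded_normal_pdf // => eq_sums.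
have double_lt : normal_sqr_mean g m1 + normal_sqr_mean g m1 <
                 normal_sqr_mean g m2 + normal_sqr_mean g m2.
  rewrite -(@lteD2rE _ (C * 2)%:E) // eq_sums lteDl ?(integral_gt0_itv mD D_ge0 lr) //.
  by rewrite fin_numD (fin_numD (normal_sqr_mean g m1)) normal_sqr_mean_fin_num.
by rewrite ltNge; apply/negP => le21; move: double_lt; rewrite ltNge leeD.
Qed.

Lemma normal_sqr_mean_lt (c m1 m2 : R) : (0 < c)%R ->
  {homo g : a b / (a <= b)%R} -> (forall u v, u < c -> u < v -> g u < g v)%R ->
  (0 <= m1 < m2)%R -> normal_sqr_mean g m1 < normal_sqr_mean g m2.
Proof.
move=> c_gt0 g_homo g_lt m12.
have [y [l [r [lr [agree agree_lr]]]]] := folded_ratio_sign_agreement m12 c_gt0 g_homo g_lt.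
have peak_gt0 x : (0 < normal_peak 1 * expR (- (x ^+ 2) / 2) :> R)%R.
  by rewrite mulr_gt0 ?expR_gt0 ?normal_peak_gt0 ?oner_eq0.
have DE x : ((g (x ^+ 2) - g y) * (folded_normal_pdf m2 x - folded_normal_pdf m1 x) =
    normal_peak 1 * expR (- (x ^+ 2) / 2) *
    ((g (x ^+ 2) - g y) * (folded_ratio m2 x - folded_ratio m1 x)))%R.
  by rewrite !folded_normal_pdfE; ring.
apply: (normal_sqr_mean_lt_of_sign (g_ge0 y) lr) => x.
  by rewrite DE mulr_ge0 // ltW.
by move=> /agree_lr agree_x; rewrite DE mulr_gt0.
Qed.

End normal_sqr_mean.

Lemma ncchisq_tailE (R : realType) K (lam c : R) :
  ncchisq_tail K lam c = normal_sqr_mean (chisq_tailR K.-1 c) (Num.sqrt lam).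
Proof. by rewrite /ncchisq_tail; under eq_integral do rewrite chisq_tailE. Qed.

Lemma ncchisq_tail_lt (R : realType) K (c lam1 lam2 : R) :
  (1 < K)%N -> 0 < c -> 0 <= lam1 < lam2 ->
  (ncchisq_tail K lam1 c < ncchisq_tail K lam2 c)%E.
Proof.
move=> K_gt1 c_gt0 /andP[lam1_ge0 lam12]; rewrite !ncchisq_tailE.
apply: (normal_sqr_mean_lt _ _ c_gt0).
- exact: measurable_chisq_tailR.
- exact: chisq_tailR_ge0_le1.
- exact: nondecreasing_chisq_tailR.
- by move=> u v; apply: chisq_tailR_lt; rewrite -ltnS prednK // ltnW.
- by rewrite sqrtr_ge0 ltr_sqrt // (le_lt_trans lam1_ge0).
Qed.

Theorem theorem1 (R : realType) (K u : nat) (sigma2 rho b s c : R)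
  (beta_partial : 'cV[R]_K) :
  (2 <= K)%N ->
  0 < sigma2 -> 0 < rho ->
  posdef (cs_cov K sigma2 rho) ->
  0 < b ->
  0 < s ->
  0 < c ->
  (0 < u)%N -> (u < K)%N ->
  (forall k, beta_partial k 0 = 0 \/ beta_partial k 0 = b) ->
  #|[set k | beta_partial k 0 != 0]| = u ->
  (1 - rho) / (1 + (K - u - 1)%:R * rho) < u%:R / K%:R ->
  (manova_asym_power s (cs_cov K sigma2 rho) (const_mx b) c
     < manova_asym_power s (cs_cov K sigma2 rho) beta_partial c)%E.
Proof.
move=> K_ge2 s2_gt0 rho_gt0 pd b_gt0 s_gt0 c_gt0 _ u_lt_K beta01 card_u ratio_lt.
have rho01 : 0 < rho < 1.
  move: pd; rewrite cs_cov_csmx => /(posdef_csmx_gt0 K_ge2).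
  by rewrite pmulr_rgt0 // subr_gt0 rho_gt0.
apply: ncchisq_tail_lt => //.
exact: manova_noncentrality_partial_gt_complete s2_gt0 rho01 b_gt0 s_gt0 u_lt_K
  beta01 card_u ratio_lt.
Qed.
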